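(* Let $q=p^h$ with $p$ prime and $h\geq 1$, let $n\ge 2$ and let $k$ be an integer with $n/2\leq k\leq n-1$. Then \[\mathrm{C}_k(n,q)\setminus \mathrm{C}_{n-k}(n,q)^\perp=\mathrm{C}_k(n,q)\setminus \mathrm{C}_k(n,q)^\perp.\]
   Context: $\mathrm{PG}(n,q)$ is the $n$-dimensional projective space over $\mathbb{F}_q$, $q=p^h$; $\theta_n=(q^{n+1}-1)/(q-1)$. For $1\le j\le n-1$, $\mathrm{C}_j(n,q)$ is the $p$-ary linear code (a subspace of $\mathbb{F}_p^{\theta_n}$, coordinates indexed by the points of $\mathrm{PG}(n,q)$) spanned over $\mathbb{F}_p$ by the incidence vectors of the $j$-dimensional subspaces of $\mathrm{PG}(n,q)$, and $\mathrm{C}_j(n,q)^\perp$ is its dual with respect to the standard scalar product over $\mathbb{F}_p$. *)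

From HB Require Import structures.
From mathcomp Require Import all_boot all_order all_algebra.
Set Implicit Arguments. Unset Strict Implicit. Unset Printing Implicit Defensive.
Import GRing.Theory.
Local Open Scope ring_scope.

(* Points of PG(n,F): 1-dimensional subspaces of F^(n+1), represented
   canonically by their (unique) generating matrix <<v>>%MS of rank 1. *)
Definition PGpoint (F : finFieldType) (n : nat) : predArgType :=
  {A : 'M[F]_(n.+1) | (\rank A == 1%N) && (<<A>>%MS == A)}.

Notation pword p F n := {ffun PGpoint F n -> 'F_p}.

(* incidence vector of the projective j-subspace spanned by the rows of
   A : 'M_(j+1, n+1) (a j-dimensional subspace when \rank A = j+1) *)
Definition incvec (p : nat) (F : finFieldType) (n j : nat)
  (A : 'M[F]_(j.+1, n.+1)) : pword p F n :=
  [ffun P : PGpoint F n => ((val P <= A)%MS)%:R].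

Definition inCode (p : nat) (F : finFieldType) (n j : nat) (c : pword p F n) : Prop :=
  exists lam : {ffun 'M[F]_(j.+1, n.+1) -> 'F_p},
    forall P : PGpoint F n,
      c P = \sum_(A : 'M[F]_(j.+1, n.+1) | \rank A == j.+1) lam A * incvec p A P.

Definition pdot (p : nat) (F : finFieldType) (n : nat) (c d : pword p F n) : 'F_p :=
  \sum_(P : PGpoint F n) c P * d P.

Definition inDual (p : nat) (F : finFieldType) (n j : nat) (c : pword p F n) : Prop :=
  forall d : pword p F n, inCode j d -> pdot c d = 0.

From HB Require Import structures.
From mathcomp Require Import all_boot all_order all_algebra zify.
Set Implicit Arguments. Unset Strict Implicit. Unset Printing Implicit Defensive.
Import GRing.Theory.
Local Open Scope ring_scope.

(* A subspace S of F^(n+1) of rank r >= 1 contains (q^r - 1)/(q - 1) projective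
   points, a number congruent to 1 modulo p since p divides q.  If dim A = k+1,
   dim B = j+1 and k + j >= n, then A and B meet in a nonzero subspace, so the
   scalar product of their incidence vectors is the number of points of A :&: B,
   i.e. 1 in F_p.  By bilinearity, for c = sum_A lam_A v_A in C_k and
   d = sum_B mu_B v_B in C_j we get  c . d = (sum lam) * (sum mu).  Testing
   against a single incidence vector shows that c lies in C_j^perp exactly when
   its total coefficient sum lam vanishes, a condition independent of j.  Both
   j = n - k and j = k satisfy k + j >= n when n/2 <= k <= n - 1, whence the
   theorem. *)

Lemma card_set_indicator (T : finType) (b : pred T) :
  #|[set x | b x]| = (\sum_x (b x : nat))%N.
Proof.
by rewrite -sum1_card big_mkcond; apply: eq_bigr => x _; rewrite inE; case: (b x).
Qed.

Section CountingInSubspaces.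

Variables (F : finFieldType) (n : nat).

Lemma card_rows_in_subspace m (S : 'M[F]_(m, n)) :
  #|[set v : 'rV[F]_n | (v <= S)%MS]| = (#|F| ^ \rank S)%N.
Proof.
have inj := row_free_inj (m:=1) (row_base_free S).
rewrite -[[set v | _]](_ : [set w *m row_base S | w in [set: 'rV[F]_(\rank S)]] = _).
  by rewrite card_imset // cardsT card_mx mul1n.
apply/setP=> v; rewrite inE; apply/imsetP/idP.
- by case=> w _ ->; rewrite -(eq_row_base S); exact: submxMl.
- by rewrite -(eq_row_base S) => /submxP [w ->]; exists w.
Qed.

Lemma card_nonzero_rows_in_subspace m (S : 'M[F]_(m, n)) :
  #|[set v : 'rV[F]_n | (v <= S)%MS && (v != 0)]| = (#|F| ^ \rank S).-1.
Proof.
rewrite -card_rows_in_subspace (cardsD1 0 [set v : 'rV[F]_n | (v <= S)%MS]).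
rewrite inE sub0mx /=; apply: eq_card => v.
by rewrite !inE andbC.
Qed.

End CountingInSubspaces.

Section ProjectivePoints.

Variables (F : finFieldType) (n : nat).

Lemma point_contains_vector (P : PGpoint F n) (v : 'rV[F]_n.+1) :
  v != 0 -> (v <= val P)%MS = (<<v>>%MS == val P).
Proof.
case: P => A /= /andP[/eqP rA /eqP gA] nz; apply/idP/idP.
- move=> vA; apply/eqP; rewrite -gA; apply/genmxP.
  by rewrite -(mxrank_leqif_eq vA) rA rank_rV nz.
- by move/eqP=> <-; rewrite genmxE submx_refl.
Qed.

Definition point_of (v : 'rV[F]_n.+1) (nz : v != 0) : PGpoint F n.
Proof.
exists <<v>>%MS; by rewrite genmx_id eqxx andbT genmxE rank_rV nz.
Defined.

Lemma unique_point_of_vector (v : 'rV[F]_n.+1) : v != 0 ->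
  (\sum_(P : PGpoint F n) ((v <= val P)%MS : nat))%N = 1%N.
Proof.
move=> nz; rewrite (bigD1 (point_of nz)) //= genmxE submx_refl big1 // => P nP.
rewrite point_contains_vector //.
by case: eqP => // e; case/eqP: nP; apply: val_inj; rewrite /= -e.
Qed.

(* Double counting of nonzero vectors of S along the points they span:
   (q - 1) * #(points of S) = q^(rank S) - 1. *)
Lemma count_points_in_subspace m (S : 'M[F]_(m, n.+1)) :
  ((#|F|).-1 * #|[set P : PGpoint F n | (val P <= S)%MS]|)%N =
  (#|F| ^ \rank S).-1.
Proof.
have point_size (P : PGpoint F n) :
    #|[set v : 'rV[F]_n.+1 | (v <= val P)%MS && (v != 0)]| = #|F|.-1.
  by rewrite card_nonzero_rows_in_subspace; case: P => A /andP[/eqP -> _].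
rewrite -card_nonzero_rows_in_subspace mulnC -sum_nat_const.
rewrite -(eq_bigr _ (fun P _ => point_size P)) card_set_indicator.
under eq_bigr => P _ do rewrite card_set_indicator.
rewrite exchange_big /=; apply: eq_bigr => v _.
have [->|nz] := eqVneq v 0; first by rewrite andbF big1 // => P _; rewrite andbF.
have through_v (P : PGpoint F n) :
    ((v <= val P) && (val P <= S))%MS = (v <= val P)%MS && (v <= S)%MS.
  apply/andP/andP=> -[vP sub]; split=> //; first exact: submx_trans sub.
  by move: vP; rewrite point_contains_vector // => /eqP <-; rewrite genmxE.
transitivity (\sum_(P : PGpoint F n) (((v <= val P) && (v <= S))%MS : nat)).
  rewrite big_mkcond; apply: eq_bigr => P _; rewrite inE andbT -through_v andbC.
  by case: (val P <= S)%MS.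
rewrite andbT; case: (v <= S)%MS; last by rewrite big1 // => P _; rewrite andbF.
rewrite -[RHS](unique_point_of_vector nz); apply: eq_bigr => P _; by rewrite andbT.
Qed.

End ProjectivePoints.

Section ScalarProducts.

(* We only use that q = #|F| vanishes in the coefficient ring F_p. *)
Variables (p : nat) (F : finFieldType) (n : nat).
Hypothesis q_eq0 : (#|F|%:R : 'F_p) = 0.

Lemma card_points_in_subspace_Fp m (S : 'M[F]_(m, n.+1)) : (0 < \rank S)%N ->
  (#|[set P : PGpoint F n | (val P <= S)%MS]|%:R : 'F_p) = 1.
Proof.
move=> rS; have E := count_points_in_subspace S.
set N := #|_| in E *.
have q_gt0 : (0 < #|F|)%N by apply/card_gt0P; exists 0.
have qm1 : ((#|F|).-1%:R : 'F_p) = -1.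
  by apply: (addIr 1); rewrite addNr -mulrSr prednK.
have : ((((#|F|).-1 * N).+1)%:R : 'F_p) = 0.
  by rewrite E prednK ?expn_gt0 ?q_gt0 // natrX q_eq0 expr0n eqn0Ngt rS.
by rewrite mulrSr natrM qm1 mulN1r addrC => /eqP; rewrite subr_eq0 => /eqP <-.
Qed.

(* Incidence vectors of a k-space and a j-space with k + j >= n have scalar
   product 1: the two subspaces meet, by Grassmann's formula. *)
Lemma pdot_incvec k j (A : 'M[F]_(k.+1, n.+1)) (B : 'M[F]_(j.+1, n.+1)) :
  \rank A = k.+1 -> \rank B = j.+1 -> (n <= k + j)%N ->
  pdot (incvec p A) (incvec p B) = 1.
Proof.
move=> rA rB hkj; rewrite -(card_points_in_subspace_Fp (S := (A :&: B)%MS)).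
  rewrite card_set_indicator natr_sum; apply: eq_bigr => P _.
  by rewrite !ffunE -natrM mulnb sub_capmx.
have := mxrank_sum_cap A B; have := rank_leq_col (A + B)%MS.
rewrite rA rB; lia.
Qed.

Definition comb j (lam : 'M[F]_(j.+1, n.+1) -> 'F_p) (P : PGpoint F n) : 'F_p :=
  \sum_(A : 'M[F]_(j.+1, n.+1) | \rank A == j.+1) lam A * incvec p A P.

Definition total_coef j (lam : 'M[F]_(j.+1, n.+1) -> 'F_p) : 'F_p :=
  \sum_(A : 'M[F]_(j.+1, n.+1) | \rank A == j.+1) lam A.

Lemma pdot_comb k j (c d : pword p F n)
  (lam : 'M[F]_(k.+1, n.+1) -> 'F_p) (mu : 'M[F]_(j.+1, n.+1) -> 'F_p) :
  (n <= k + j)%N -> (forall P, c P = comb lam P) -> (forall P, d P = comb mu P) ->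
  pdot c d = total_coef lam * total_coef mu.
Proof.
move=> hkj hc hd; rewrite /pdot.
under eq_bigr => P _ do rewrite hc hd /comb mulr_suml.
rewrite exchange_big /= mulr_suml; apply: eq_bigr => A /eqP rA.
under eq_bigr => P _ do rewrite mulr_sumr.
rewrite exchange_big /= mulr_sumr; apply: eq_bigr => B /eqP rB.
rewrite -[RHS]mulr1 -(pdot_incvec rA rB hkj) /pdot mulr_sumr.
by apply: eq_bigr => P _; rewrite mulrACA.
Qed.

Lemma incvec_in_code j (B : 'M[F]_(j.+1, n.+1)) : \rank B = j.+1 ->
  exists2 mu : {ffun 'M[F]_(j.+1, n.+1) -> 'F_p},
    forall P, incvec p B P = comb mu P & total_coef mu = 1.
Proof.
move=> rB; exists [ffun A => ((A == B) : nat)%:R] => [P|].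
  rewrite /comb (bigD1 B) ?rB //= !ffunE eqxx mul1r big1 ?addr0 //.
  by move=> A /andP[_ nAB]; rewrite ffunE (negbTE nAB) mul0r.
rewrite /total_coef (bigD1 B) ?rB //= ffunE eqxx big1 ?addr0 //.
by move=> A /andP[_ nAB]; rewrite ffunE (negbTE nAB).
Qed.

Lemma inDual_comb k j (c : pword p F n) (lam : 'M[F]_(k.+1, n.+1) -> 'F_p) :
  (j <= n)%N -> (n <= k + j)%N -> (forall P, c P = comb lam P) ->
  inDual j c <-> total_coef lam = 0.
Proof.
move=> hj hkj hc; split=> [c_dual | lam0 d [mu hd]]; last first.
  by rewrite (pdot_comb hkj hc hd) lam0 mul0r.
have rB : \rank (pid_mx j.+1 : 'M[F]_(j.+1, n.+1)) = j.+1.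
  by rewrite rank_pid_mx.
have [mu hd mu1] := incvec_in_code rB.
have := c_dual _ (ex_intro _ mu hd).
by rewrite (pdot_comb hkj hc hd) mu1 mulr1.
Qed.

End ScalarProducts.

Lemma card_eq0_Fp (p h : nat) (F : finFieldType) :
  prime p -> (0 < h)%N -> #|F| = (p ^ h)%N -> (#|F|%:R : 'F_p) = 0.
Proof.
by move=> pp hh ->; rewrite natrX pchar_Fp_0 // expr0n eqn0Ngt hh.
Qed.

Theorem mainTheorem6 (p h : nat) (F : finFieldType) (n k : nat)
  (hp : prime p) (hh : (0 < h)%N) (hq : #|F| = (p ^ h)%N)
  (hn : (2 <= n)%N) (hk1 : (n <= k.*2)%N) (hk2 : (k <= n - 1)%N) :
  forall c : pword p F n,
    (inCode k c /\ ~ inDual (n - k) c) <-> (inCode k c /\ ~ inDual k c).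
Proof.
move=> c; have q_eq0 := card_eq0_Fp hp hh hq.
have same_dual (lam : 'M[F]_(k.+1, n.+1) -> 'F_p) : (forall P, c P = comb lam P) ->
    inDual (n - k) c <-> inDual k c.
  move=> hc; rewrite (inDual_comb q_eq0 (j := n - k) _ _ hc); try lia.
  by rewrite (inDual_comb q_eq0 (j := k) _ _ hc); try lia.
split=> -[[lam hc] nd]; (split; first by exists lam).
- by rewrite -(same_dual lam hc).
- by rewrite (same_dual lam hc).
Qed.
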